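(* Let $P:\mathcal{C}^{\mathrm{op}}\to\mathbf{Pos}$ be a universal slat-doctrine such that $\mathcal{C}$ has exponents. Then the multiplication $\mu_P:(P^{ex})^{ex}\to P^{ex}$ of the existential-completion 2-monad preserves the universal structure, i.e. for all objects $A,B$ of $\mathcal{C}$, $\mu_{P,A}$ commutes with the right adjoints of reindexing along $\mathrm{pr}_A:A\times B\to A$ in $(P^{ex})^{ex}$ and in $P^{ex}$.
   Context: A slat-doctrine is a functor $P:\mathcal{C}^{\mathrm{op}}\to\mathbf{Pos}$ with $\mathcal{C}$ having finite products; $P_f$ is reindexing along $f$. It is existential (resp. universal) if reindexing along each product projection has a left adjoint $\exists$ (resp. right adjoint $\forall$) satisfying Beck–Chevalley (for every pullback of a projection $\mathrm{pr}:X\to A$ along $f:A'\to A$, with resulting projection $\mathrm{pr}'$ and $f':X'\to X$, $\exists_{\mathrm{pr}'}P_{f'}=P_f\exists_{\mathrm{pr}}$, resp. $\forall_{\mathrm{pr}'}P_{f'}=P_f\forall_{\mathrm{pr}}$). Existential completion: $P^{ex}(A)$ is the poset (reflection) of triples $(A,B,\alpha)$, $\alpha\in P(A\times B)$, with $(A,B,\alpha)\le(A,C,\beta)$ iff some $f:A\times B\to C$ has $\alpha\le P_{\langle\mathrm{pr}_A,f\rangle}(\beta)$; $P^{ex}_f(C,D,\gamma)=(A,D,P_{f\times 1_D}(\gamma))$. $P^{ex}$ is existential with $\exists^{ex}_{\mathrm{pr}_1}(A_1\times A_2,B,\beta)=(A_1,A_2\times B,\beta)$; when $P$ is universal and $\mathcal{C}$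 has exponents, $P^{ex}$ and $(P^{ex})^{ex}$ are universal. The multiplication component $\mu_{P,A}:(P^{ex})^{ex}(A)\to P^{ex}(A)$ sends $(A,B,x)$, with $x\in P^{ex}(A\times B)$, to $\exists^{ex}_{\mathrm{pr}_A}(x)$ for $\mathrm{pr}_A:A\times B\to A$. *)

Set Implicit Arguments.
Unset Strict Implicit.

Record FPCat := {
  obj : Type;
  hom : obj -> obj -> Type;
  idm : forall A, hom A A;
  comp : forall A B C, hom B C -> hom A B -> hom A C;
  comp_id_l : forall A B (f : hom A B), comp (idm B) f = f;
  comp_id_r : forall A B (f : hom A B), comp f (idm A) = f;
  comp_assoc : forall A B C D (h : hom C D) (g : hom B C) (f : hom A B),
      comp h (comp g f) = comp (comp h g) f;
  term : obj;
  bang : forall A, hom A term;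
  bang_uniq : forall A (f : hom A term), f = bang A;
  prod : obj -> obj -> obj;
  pr1 : forall A B, hom (prod A B) A;
  pr2 : forall A B, hom (prod A B) B;
  pair : forall X A B, hom X A -> hom X B -> hom X (prod A B);
  pair_pr1 : forall X A B (f : hom X A) (g : hom X B), comp (pr1 A B) (pair f g) = f;
  pair_pr2 : forall X A B (f : hom X A) (g : hom X B), comp (pr2 A B) (pair f g) = g;
  pair_uniq : forall X A B (h : hom X (prod A B)),
      pair (comp (pr1 A B) h) (comp (pr2 A B) h) = h
}.

Arguments hom : clear implicits.
Arguments obj C : rename.
Arguments idm {C} A : rename.
Arguments comp {C A B D} _ _ : rename.
Arguments bang {C} A : rename.
Arguments pr1 {C} A B : rename.
Arguments pr2 {C} A B : rename.
Arguments pair {C X A B} _ _ : rename.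
Arguments prod {C} _ _ : rename.
Arguments term {C} : rename.

Definition prodmap (C : FPCat) (A A' B B' : obj C) (f : hom C A A') (g : hom C B B')
  : hom C (prod A B) (prod A' B') :=
  pair (comp f (pr1 A B)) (comp g (pr2 A B)).

Definition assoc (C : FPCat) (A B D : obj C) : hom C (prod A (prod B D)) (prod (prod A B) D) :=
  pair (pair (pr1 A (prod B D)) (comp (pr1 B D) (pr2 A (prod B D))))
       (comp (pr2 B D) (pr2 A (prod B D))).

Record Exponents (C : FPCat) := {
  expo : obj C -> obj C -> obj C;               (* expo B D = D^B *)
  ev : forall B D, hom C (prod (expo B D) B) D;
  cur : forall A B D, hom C (prod A B) D -> hom C A (expo B D);
  ev_cur : forall A B D (f : hom C (prod A B) D),
      comp (ev B D) (prodmap (cur f) (idm B)) = f;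
  cur_uniq : forall A B D (g : hom C A (expo B D)),
      cur (comp (ev B D) (prodmap g (idm B))) = g
}.

Record Doctrine (C : FPCat) := {
  dcar : obj C -> Type;
  dle : forall A, dcar A -> dcar A -> Prop;
  dre : forall A B, hom C A B -> dcar B -> dcar A
}.

Arguments dcar {C} d A : rename.
Arguments dle {C} d {A} _ _ : rename.
Arguments dre {C} d {A B} _ _ : rename.

Unset Implicit Arguments.

Definition is_poset_doctrine {C : FPCat} (P : Doctrine C) : Prop :=
  (forall A (a : dcar P A), dle P a a) /\
  (forall A (a b c : dcar P A), dle P a b -> dle P b c -> dle P a c) /\
  (forall A (a b : dcar P A), dle P a b -> dle P b a -> a = b) /\
  (forall A B (f : hom C A B) (a b : dcar P B), dle P a b -> dle P (dre P f a) (dre P f b)) /\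
  (forall A (a : dcar P A), dre P (idm A) a = a) /\
  (forall A B D (f : hom C A B) (g : hom C B D) (a : dcar P D),
      dre P (comp g f) a = dre P f (dre P g a)).

Definition right_adj_proj {C : FPCat} (D : Doctrine C)
  (fa : forall A B : obj C, dcar D (prod A B) -> dcar D A) : Prop :=
  forall A B (a : dcar D A) (b : dcar D (prod A B)),
    dle D (dre D (pr1 A B) a) b <-> dle D a (fa A B b).

(* Beck-Chevalley for the pullback of pr_A : A x B -> A along f : A' -> A
   (the pullback being A' x B with f x 1_B). *)
Definition BC_forall {C : FPCat} (D : Doctrine C)
  (fa : forall A B : obj C, dcar D (prod A B) -> dcar D A) : Prop :=
  forall A A' B (f : hom C A' A) (b : dcar D (prod A B)),
    fa A' B (dre D (prodmap f (idm B)) b) = dre D f (fa A B b).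

Definition universal {C : FPCat} (P : Doctrine C) : Prop :=
  exists fa : forall A B : obj C, dcar P (prod A B) -> dcar P A,
    right_adj_proj P fa /\ BC_forall P fa.

(* Existential completion P^ex (as a preorder; P^ex(A) is its poset reflection). *)
Definition exCompl {C : FPCat} (P : Doctrine C) : Doctrine C := {|
  dcar := fun A => { B : obj C & dcar P (prod A B) };
  dle := fun A x y =>
    exists f : hom C (prod A (projT1 x)) (projT1 y),
      dle P (projT2 x) (dre P (pair (pr1 A (projT1 x)) f) (projT2 y));
  dre := fun A A' f y =>
    existT (fun B => dcar P (prod A B)) (projT1 y)
           (dre P (prodmap f (idm (projT1 y))) (projT2 y))
|}.

(* Equality in the poset reflection. *)
Definition dequiv {C : FPCat} (D : Doctrine C) {A : obj C} (x y : dcar D A) : Prop :=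
  dle D x y /\ dle D y x.

(* Multiplication mu_{P,A} : (P^ex)^ex(A) -> P^ex(A):
   (A, B, (A x B, D, alpha)) |-> exists^ex_{pr_A} (A x B, D, alpha)
                             = (A, B x D, P_assoc(alpha)). *)
Definition mu {C : FPCat} (P : Doctrine C) (A : obj C)
  (x : dcar (exCompl (exCompl P)) A) : dcar (exCompl P) A :=
  existT (fun E => dcar P (prod A E)) (prod (projT1 x) (projT1 (projT2 x)))
         (dre P (assoc A (projT1 x) (projT1 (projT2 x))) (projT2 (projT2 x))).

(* The multiplication mu has a left adjoint ex_eta = P^ex(eta_P): ex_eta u <= x iff
   u <= mu x, since a witness A x Z -> X x Y for the right-hand side is the same
   as a pair of witnesses A x Z -> X and (A x Z) x 1 -> Y for the left-hand side.
   Both mu and ex_eta commute strictly with reindexing, and a map with a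
   reindexing-stable left adjoint commutes with the right adjoints of reindexing
   along projections.  Neither the exponents of C nor the universality of P enter
   the argument: they only guarantee that the right adjoints fa1 and fa2 exist. *)

Section ProductMorphisms.
Context {C : FPCat}.

Lemma comp_pair (X Y A B : obj C) (f : hom C Y A) (g : hom C Y B) (h : hom C X Y) :
  comp (pair f g) h = pair (comp f h) (comp g h).
Proof.
  rewrite <- (pair_uniq (comp (pair f g) h)), !comp_assoc, pair_pr1, pair_pr2.
  reflexivity.
Qed.

Lemma prod_hom_ext (X A B : obj C) (h1 h2 : hom C X (prod A B)) :
  comp (pr1 A B) h1 = comp (pr1 A B) h2 ->
  comp (pr2 A B) h1 = comp (pr2 A B) h2 -> h1 = h2.
Proof.
  intros E1 E2. rewrite <- (pair_uniq h1), <- (pair_uniq h2), E1, E2.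
  reflexivity.
Qed.

Lemma pair_pr1_pr2 (A B : obj C) : pair (pr1 A B) (pr2 A B) = idm (prod A B).
Proof. rewrite <- (pair_uniq (idm (prod A B))), !comp_id_r. reflexivity. Qed.

Lemma compA_pr1_pair (X Y A B : obj C) (k : hom C A Y) (f : hom C X A) (g : hom C X B) :
  comp (comp k (pr1 A B)) (pair f g) = comp k f.
Proof. rewrite <- comp_assoc, pair_pr1. reflexivity. Qed.

Lemma compA_pr2_pair (X Y A B : obj C) (k : hom C B Y) (f : hom C X A) (g : hom C X B) :
  comp (comp k (pr2 A B)) (pair f g) = comp k g.
Proof. rewrite <- comp_assoc, pair_pr2. reflexivity. Qed.

Lemma hom_term_eq (X : obj C) (a b : hom C X term) : a = b.
Proof. rewrite (bang_uniq a), (bang_uniq b). reflexivity. Qed.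

End ProductMorphisms.

Ltac prod_eq :=
  unfold prodmap, assoc;
  repeat rewrite ?comp_assoc, ?pair_pr1, ?pair_pr2, ?comp_pair, ?comp_id_l,
    ?comp_id_r, ?compA_pr1_pair, ?compA_pr2_pair;
  first [ reflexivity | apply hom_term_eq | apply prod_hom_ext; prod_eq ].

Record preorder_doctrine {C : FPCat} (D : Doctrine C) : Prop := {
  dle_refl : forall A (a : dcar D A), dle D a a;
  dle_trans : forall A (a b c : dcar D A), dle D a b -> dle D b c -> dle D a c;
  dre_mono : forall A B (f : hom C A B) (a b : dcar D B),
    dle D a b -> dle D (dre D f a) (dre D f b);
  dre_id : forall A (a : dcar D A), dre D (idm A) a = a;
  dre_comp : forall A B E (f : hom C A B) (g : hom C B E) (a : dcar D E),
    dre D f (dre D g a) = dre D (comp g f) a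
}.

Arguments dle_refl {C D} _ {A} a.
Arguments dle_trans {C D} _ {A a b c} _ _.
Arguments dre_mono {C D} _ {A B} f {a b} _.
Arguments dre_id {C D} _ {A} a.
Arguments dre_comp {C D} _ {A B E} f g a.

Lemma poset_doctrine_preorder {C : FPCat} (P : Doctrine C) :
  is_poset_doctrine P -> preorder_doctrine P.
Proof.
  intros (Hrefl & Htrans & _ & Hmono & Hid & Hcomp).
  split; try assumption. intros; symmetry; apply Hcomp.
Qed.

Section ExistentialCompletion.
Context {C : FPCat} {P : Doctrine C}.
Hypothesis HP : preorder_doctrine P.

Lemma dle_dre_eq A B (f g : hom C A B) (a : dcar P B) :
  f = g -> dle P (dre P f a) (dre P g a).
Proof. intros ->. apply (dle_refl HP). Qed.

Lemma exCompl_preorder : preorder_doctrine (exCompl P).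
Proof.
  split.
  - intros A [B al]. exists (pr2 A B). simpl.
    rewrite pair_pr1_pr2, (dre_id HP). apply (dle_refl HP).
  - intros A [B al] [B' be] [B'' ga] [f Hf] [g Hg]; simpl in *.
    exists (comp g (pair (pr1 A B) f)).
    apply (dle_trans HP Hf). apply (dle_trans HP (dre_mono HP _ Hg)).
    rewrite (dre_comp HP). apply dle_dre_eq. prod_eq.
  - intros A A' h [B al] [B' be] [f Hf]; simpl in *.
    exists (comp f (prodmap h (idm B))).
    apply (dle_trans HP (dre_mono HP _ Hf)).
    rewrite !(dre_comp HP). apply dle_dre_eq. prod_eq.
  - intros A [B al]. simpl. f_equal.
    replace (prodmap (idm A) (idm B)) with (idm (prod A B)) by (symmetry; prod_eq).
    apply (dre_id HP).
  - intros A A' A'' f g [B al]. simpl. f_equal.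
    rewrite (dre_comp HP). f_equal. prod_eq.
Qed.

(* The component at A of P^ex(eta_P), where eta_P a = (1, P_pr a). *)
Definition ex_eta (A : obj C) (u : dcar (exCompl P) A) : dcar (exCompl (exCompl P)) A :=
  existT _ (projT1 u)
    (existT (fun E => dcar P (prod (prod A (projT1 u)) E)) term
       (dre P (pr1 (prod A (projT1 u)) term) (projT2 u))).

Lemma ex_eta_mu_adjoint A (u : dcar (exCompl P) A) (x : dcar (exCompl (exCompl P)) A) :
  dle (exCompl (exCompl P)) (ex_eta A u) x <-> dle (exCompl P) u (mu P A x).
Proof.
  destruct u as [Z ga], x as [X [Y al]]. simpl. split.
  - intros [f [g Hg]]; simpl in Hg.
    set (diag := pair (idm (prod A Z)) (bang (prod A Z))).
    exists (pair f (comp g diag)).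
    assert (ga_restore : ga = dre P diag (dre P (pr1 (prod A Z) term) ga)).
    { rewrite (dre_comp HP). unfold diag. rewrite pair_pr1, (dre_id HP). reflexivity. }
    rewrite ga_restore.
    apply (dle_trans HP (dre_mono HP _ Hg)).
    rewrite !(dre_comp HP). apply dle_dre_eq. unfold diag. prod_eq.
  - intros [h Hh].
    exists (comp (pr1 X Y) h). simpl.
    exists (comp (pr2 X Y) (comp h (pr1 (prod A Z) term))).
    apply (dle_trans HP (dre_mono HP _ Hh)).
    rewrite !(dre_comp HP). apply dle_dre_eq. prod_eq.
Qed.

Lemma ex_eta_natural A A' (h : hom C A' A) (u : dcar (exCompl P) A) :
  dre (exCompl (exCompl P)) h (ex_eta A u) = ex_eta A' (dre (exCompl P) h u).
Proof.
  destruct u as [Z ga]. unfold ex_eta. simpl. do 2 f_equal.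
  rewrite !(dre_comp HP). f_equal. prod_eq.
Qed.

Lemma mu_natural A A' (h : hom C A' A) (x : dcar (exCompl (exCompl P)) A) :
  dre (exCompl P) h (mu P A x) = mu P A' (dre (exCompl (exCompl P)) h x).
Proof.
  destruct x as [X [Y al]]. unfold mu. simpl. f_equal.
  rewrite !(dre_comp HP). f_equal. prod_eq.
Qed.

End ExistentialCompletion.

Section NaturalRightAdjoint.
Context {C : FPCat} {D1 D2 : Doctrine C}.
Hypotheses (HD1 : preorder_doctrine D1) (HD2 : preorder_doctrine D2).
Variables (m : forall A, dcar D2 A -> dcar D1 A) (l : forall A, dcar D1 A -> dcar D2 A).
Hypothesis l_m_adjoint : forall A u x, dle D2 (l A u) x <-> dle D1 u (m A x).
Hypothesis m_natural : forall A A' (h : hom C A' A) x, dre D1 h (m A x) = m A' (dre D2 h x).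
Hypothesis l_natural : forall A A' (h : hom C A' A) u, dre D2 h (l A u) = l A' (dre D1 h u).
Variables (fa1 : forall A B, dcar D1 (prod A B) -> dcar D1 A)
          (fa2 : forall A B, dcar D2 (prod A B) -> dcar D2 A).
Hypotheses (H1 : right_adj_proj D1 fa1) (H2 : right_adj_proj D2 fa2).

Lemma natural_right_adjoint_preserves_forall A B (x : dcar D2 (prod A B)) :
  dequiv D1 (m A (fa2 A B x)) (fa1 A B (m (prod A B) x)).
Proof.
  assert (counit : forall A' (y : dcar D2 A'), dle D2 (l A' (m A' y)) y).
  { intros A' y. apply l_m_adjoint, (dle_refl HD1). }
  split.
  - apply H1. rewrite m_natural. apply l_m_adjoint.
    apply (dle_trans HD2 (counit _ _)).
    apply H2, (dle_refl HD2).
  - apply l_m_adjoint, H2. rewrite l_natural.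
    apply l_m_adjoint, H1, (dle_refl HD1).
Qed.

End NaturalRightAdjoint.

Theorem lemma2 (C : FPCat) (E : Exponents C) (P : Doctrine C)
  (HP : is_poset_doctrine P) (Huniv : universal P)
  (fa1 : forall A B : obj C, dcar (exCompl P) (prod A B) -> dcar (exCompl P) A)
  (H1 : right_adj_proj (exCompl P) fa1)
  (fa2 : forall A B : obj C,
      dcar (exCompl (exCompl P)) (prod A B) -> dcar (exCompl (exCompl P)) A)
  (H2 : right_adj_proj (exCompl (exCompl P)) fa2) :
  forall (A B : obj C) (x : dcar (exCompl (exCompl P)) (prod A B)),
    dequiv (exCompl P) (mu P A (fa2 A B x)) (fa1 A B (mu P (prod A B) x)).
Proof.
  pose proof (poset_doctrine_preorder P HP) as HPpre.
  pose proof (exCompl_preorder HPpre) as Hex.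
  intros A B x.
  apply (natural_right_adjoint_preserves_forall Hex (exCompl_preorder Hex)
           (mu P) ex_eta).
  - exact (ex_eta_mu_adjoint HPpre).
  - exact (mu_natural HPpre).
  - exact (ex_eta_natural HPpre).
  - exact H1.
  - exact H2.
Qed.
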